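(* Let $\mathcal{E}$ be a right exact category and let $\mathcal{A}$ be a strongly right percolating subcategory of $\mathcal{E}$. Then the right multiplicative system $S_{\mathcal{A}}$ of weak isomorphisms is right weakly saturated.
   Context: A conflation category is an additive category with a class of kernel-cokernel pairs (conflations; kernel part = inflation, cokernel part = deflation) closed under isomorphism. It is right exact if $1_0$ is a deflation, deflations compose, and pullbacks of deflations along arbitrary morphisms exist and are deflations. A non-empty full subcategory $\mathcal{A}$ of $\mathcal{E}$ is right percolating if: (P1) for every conflation $A'\rightarrowtail A\twoheadrightarrow A''$, $A\in\mathcal{A}$ iff $A',A''\in\mathcal{A}$; (P2) every morphism $C\to A$ with $A\in\mathcal{A}$ factors as a deflation $C\twoheadrightarrow A'$ with $A'\in\mathcal{A}$ followed by a morphism $A'\to A$; (P3) for an inflation $C\rightarrowtail D$ and a deflation $C\twoheadrightarrow A$ with $A\in\mathcal{A}$, the pushout exists and the induced maps $A\to P$, $D\to P$ are an inflation and a deflation; (P4) for every inflation $A\rightarrowtail X$ and deflation $X\twoheadrightarrow B$ with $A,B\in\mathcal{A}$ there are $A',B'\in\mathcal{A}$, deflations $A\twoheadrightarrow A'$, $X\twoheadrightarrow B'$, an inflation $A'\rightarrowtail B'$ and a morphism $B'\to B$ with $A\rightarrowtail X\twoheadrightarrow B'$ equal to $A\twoheadrightarrow A'\rightarrowtail B'$ and $X\twoheadrightarrow B$ equal to $X\twoheadrightarrow B'\to B$. It is strongly right percolating if moreover the morphism $A'\to A$ in (P2) can always be chosen to be a monomorphism. An $\mathcal{A}^{-1}$-inflation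 is an inflation with cokernel in $\mathcal{A}$, an $\mathcal{A}^{-1}$-deflation a deflation with kernel in $\mathcal{A}$; $S_{\mathcal{A}}$ is the class of finite composites of these (it is a right multiplicative system). With $Q\colon\mathcal{E}\to S_{\mathcal{A}}^{-1}\mathcal{E}$ the localization functor, $S_{\mathcal{A}}$ is right weakly saturated if for every morphism $f$ of $\mathcal{E}$ with $Q(f)$ an isomorphism there exists $s\in S_{\mathcal{A}}$ with $f\circ s\in S_{\mathcal{A}}$. *)

From HB Require Import structures.
From mathcomp Require Import all_boot all_algebra.
Set Implicit Arguments. Unset Strict Implicit. Unset Printing Implicit Defensive.
Import GRing.Theory.
Local Open Scope ring_scope.

Record Category := {
  cOb :> Type;
  cHom : cOb -> cOb -> Type;
  cid : forall A, cHom A A;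
  ccomp : forall A B C, cHom B C -> cHom A B -> cHom A C;
  ccomp_assoc : forall A B C D (h : cHom C D) (g : cHom B C) (f : cHom A B),
      ccomp h (ccomp g f) = ccomp (ccomp h g) f;
  ccomp_id_l : forall A B (f : cHom A B), ccomp (cid B) f = f;
  ccomp_id_r : forall A B (f : cHom A B), ccomp f (cid A) = f }.
Arguments ccomp {c A B C}.
Arguments cid {c}.

Definition c_is_iso (D : Category) (A B : D) (f : cHom A B) : Prop :=
  exists g : cHom B A, ccomp g f = cid A /\ ccomp f g = cid B.

Record AddCat := {
  Ob :> Type;
  Hom : Ob -> Ob -> zmodType;
  idm : forall A, Hom A A;
  comp : forall A B C, Hom B C -> Hom A B -> Hom A C;
  comp_assoc : forall A B C D (h : Hom C D) (g : Hom B C) (f : Hom A B),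
      comp h (comp g f) = comp (comp h g) f;
  comp_id_l : forall A B (f : Hom A B), comp (idm B) f = f;
  comp_id_r : forall A B (f : Hom A B), comp f (idm A) = f;
  comp_addl : forall A B C (g g' : Hom B C) (f : Hom A B),
      comp (g + g') f = comp g f + comp g' f;
  comp_addr : forall A B C (g : Hom B C) (f f' : Hom A B),
      comp g (f + f') = comp g f + comp g f';
  zero_ob : Ob;
  zero_ob_id : idm zero_ob = 0;
  biprod_ex : forall A B, exists (P : Ob) (i1 : Hom A P) (i2 : Hom B P)
      (p1 : Hom P A) (p2 : Hom P B),
      [/\ comp p1 i1 = idm A, comp p2 i2 = idm B, comp p1 i2 = 0, comp p2 i1 = 0
        & comp i1 p1 + comp i2 p2 = idm P] }.
Arguments comp {a A B C}.
Arguments idm {a}.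
Notation "g \o' f" := (comp g f) (at level 50, left associativity).

Section Basic.
Variable E : AddCat.

Definition is_iso (A B : E) (f : Hom A B) : Prop :=
  exists g : Hom B A, g \o' f = idm A /\ f \o' g = idm B.

Definition is_mono (A B : E) (f : Hom A B) : Prop :=
  forall X (u v : Hom X A), f \o' u = f \o' v -> u = v.

Definition is_kernel (A B C : E) (i : Hom A B) (p : Hom B C) : Prop :=
  p \o' i = 0 /\
  forall X (g : Hom X B), p \o' g = 0 -> exists! h : Hom X A, i \o' h = g.

Definition is_cokernel (A B C : E) (i : Hom A B) (p : Hom B C) : Prop :=
  p \o' i = 0 /\
  forall X (g : Hom B X), g \o' i = 0 -> exists! h : Hom C X, h \o' p = g.

Definition kernel_cokernel_pair (A B C : E) (i : Hom A B) (p : Hom B C) : Prop :=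
  is_kernel i p /\ is_cokernel i p.

Definition is_pullback (B C C' P : E) (p : Hom B C) (f : Hom C' C)
    (p' : Hom P C') (f' : Hom P B) : Prop :=
  p \o' f' = f \o' p' /\
  forall X (u : Hom X B) (v : Hom X C'), p \o' u = f \o' v ->
    exists! h : Hom X P, f' \o' h = u /\ p' \o' h = v.

Definition is_pushout (C D A P : E) (u : Hom C D) (v : Hom C A)
    (u' : Hom A P) (v' : Hom D P) : Prop :=
  v' \o' u = u' \o' v /\
  forall X (x : Hom D X) (y : Hom A X), x \o' u = y \o' v ->
    exists! h : Hom P X, h \o' v' = x /\ h \o' u' = y.
End Basic.

Record ConflCat := {
  cE :> AddCat;
  confl : forall A B C : cE, Hom A B -> Hom B C -> Prop;
  confl_kc : forall A B C (i : Hom A B) (p : Hom B C),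
      confl i p -> kernel_cokernel_pair i p;
  confl_iso : forall A B C A' B' C' (i : Hom A B) (p : Hom B C)
      (i' : Hom A' B') (p' : Hom B' C') (a : Hom A A') (b : Hom B B') (c : Hom C C'),
      confl i p -> is_iso a -> is_iso b -> is_iso c ->
      i' \o' a = b \o' i -> p' \o' b = c \o' p -> confl i' p' }.

Section Conflations.
Variable E : ConflCat.

Definition inflation (A B : E) (i : Hom A B) : Prop :=
  exists (C : E) (p : Hom B C), confl i p.
Definition deflation (B C : E) (p : Hom B C) : Prop :=
  exists (A : E) (i : Hom A B), confl i p.

Definition right_exact : Prop :=
  [/\ deflation (idm (zero_ob E)),
      (forall A B C (p : Hom A B) (q : Hom B C),
          deflation p -> deflation q -> deflation (q \o' p))
    & (forall B C C' (p : Hom B C) (f : Hom C' C), deflation p ->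
          exists (P : E) (p' : Hom P C') (f' : Hom P B),
            is_pullback p f p' f' /\ deflation p')].

Variable PA : E -> Prop.  (* the full subcategory A, given by its objects *)

Definition perc_P1 : Prop :=
  forall A' A A'' (i : Hom A' A) (p : Hom A A''), confl i p ->
    (PA A <-> PA A' /\ PA A'').

Definition perc_P2 : Prop :=
  forall C A (f : Hom C A), PA A ->
    exists (A' : E) (d : Hom C A') (g : Hom A' A),
      [/\ deflation d, PA A' & g \o' d = f].

Definition perc_P2_strong : Prop :=
  forall C A (f : Hom C A), PA A ->
    exists (A' : E) (d : Hom C A') (g : Hom A' A),
      [/\ deflation d, PA A', is_mono g & g \o' d = f].

Definition perc_P3 : Prop :=
  forall C D A (c : Hom C D) (q : Hom C A), inflation c -> deflation q -> PA A ->
    exists (P : E) (i' : Hom A P) (q' : Hom D P),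
      [/\ is_pushout c q i' q', inflation i' & deflation q'].

Definition perc_P4 : Prop :=
  forall A X B (i : Hom A X) (d : Hom X B), inflation i -> deflation d ->
    PA A -> PA B ->
    exists (A' B' : E) (a : Hom A A') (b : Hom X B') (j : Hom A' B') (m : Hom B' B),
      [/\ PA A', PA B', deflation a, deflation b & inflation j] /\
      b \o' i = j \o' a /\ m \o' b = d.

Definition right_percolating : Prop :=
  [/\ (exists A : E, PA A), perc_P1, perc_P2, perc_P3 & perc_P4].

Definition strongly_right_percolating : Prop :=
  right_percolating /\ perc_P2_strong.

Definition A_inflation (A B : E) (i : Hom A B) : Prop :=
  exists (C : E) (p : Hom B C), confl i p /\ PA C.
Definition A_deflation (B C : E) (p : Hom B C) : Prop :=
  exists (A : E) (i : Hom A B), confl i p /\ PA A.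

Inductive S_A : forall A B : E, Hom A B -> Prop :=
| S_A_infl : forall A B (i : Hom A B), A_inflation i -> S_A i
| S_A_defl : forall A B (p : Hom A B), A_deflation p -> S_A p
| S_A_comp : forall A B C (s : Hom A B) (t : Hom B C), S_A s -> S_A t -> S_A (t \o' s).

Record Functor (D : Category) := {
  fob : E -> D;
  fmap : forall A B : E, Hom A B -> cHom (fob A) (fob B);
  fmap_id : forall A, fmap (idm A) = cid (fob A);
  fmap_comp : forall A B C (g : Hom B C) (f : Hom A B),
      fmap (g \o' f) = ccomp (fmap g) (fmap f) }.

(* Q(f) is an isomorphism, Q : E -> S_A^{-1} E the localization functor.
   By the universal property of the localization, this holds iff F(f) is an
   isomorphism for every functor F that inverts every morphism of S_A. *)
Definition Q_inverts (A B : E) (f : Hom A B) : Prop :=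
  forall (D : Category) (F : Functor D),
    (forall X Y (s : Hom X Y), S_A s -> c_is_iso (fmap F s)) ->
    c_is_iso (fmap F f).

Definition right_weakly_saturated : Prop :=
  forall A B (f : Hom A B), Q_inverts f ->
    exists (X : E) (s : Hom X A), S_A s /\ S_A (f \o' s).
End Conflations.

(* S_A is stable under pullback and right cancellable: if s a = s b with s in
   S_A, then a u = b u for some u in S_A.  Strong percolation is what makes
   A^{-1}-inflations pull back (the monic factor in P2 computes the pullback as
   a kernel).  Consequently every s in S_A acts bijectively, by pullback, on
   S_A-saturated sieves (families of maps into Y closed under precomposition
   and under cancelling an S_A-morphism on the right), the inverse being the
   saturated image.  If Q(f) is invertible, so is pullback of sieves along f;
   its injectivity forces the saturated image of f to be the maximal sieve,
   i.e. f x = t for some x and some t in S_A.  Pulling t back along f gives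
   t f' = f t' with t' in S_A and a section of f'; the same argument applied
   to this section, which is monic, yields u in S_A with f' u in S_A, and
   s = t' u satisfies f s = t (f' u). *)

From mathcomp Require Import all_boot all_algebra.
From Stdlib Require Import ProofIrrelevance FunctionalExtensionality.
From Stdlib Require Import PropExtensionality.
Set Implicit Arguments. Unset Strict Implicit. Unset Printing Implicit Defensive.
Import GRing.Theory.
Local Open Scope ring_scope.

Section AdditiveCategory.
Variable E : AddCat.

Lemma compBr (A B C : E) (g : Hom B C) (a b : Hom A B) :
  g \o' (a - b) = (g \o' a) - (g \o' b).
Proof. by apply/eqP; rewrite eq_sym subr_eq -comp_addr subrK. Qed.

Lemma compBl (A B C : E) (a b : Hom B C) (f : Hom A B) :
  (a - b) \o' f = (a \o' f) - (b \o' f).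
Proof. by apply/eqP; rewrite eq_sym subr_eq -comp_addl subrK. Qed.

Lemma comp0r (A B C : E) (g : Hom B C) : g \o' (0 : Hom A B) = 0.
Proof. by rewrite -(subrr (0 : Hom A B)) compBr subrr. Qed.

Lemma comp0l (A B C : E) (f : Hom A B) : (0 : Hom B C) \o' f = 0.
Proof. by rewrite -(subrr (0 : Hom B C)) compBl subrr. Qed.

Lemma iso_idm (A : E) : is_iso (idm A).
Proof. by exists (idm A); rewrite comp_id_l. Qed.

Lemma iso_comp (A B C : E) (g : Hom B C) (f : Hom A B) :
  is_iso g -> is_iso f -> is_iso (g \o' f).
Proof.
move=> [g' [g'g gg']] [f' [f'f ff']]; exists (f' \o' g'); split.
  by rewrite comp_assoc -(comp_assoc f') g'g comp_id_r.
by rewrite comp_assoc -(comp_assoc g) ff' comp_id_r.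
Qed.

Lemma section_mono (A B : E) (r : Hom B A) (s : Hom A B) :
  r \o' s = idm A -> is_mono s.
Proof.
move=> rs X u v su_sv.
by rewrite -(comp_id_l u) -(comp_id_l v) -rs -!comp_assoc su_sv.
Qed.

Lemma kernel_mono (A B C : E) (i : Hom A B) (p : Hom B C) :
  is_kernel i p -> is_mono i.
Proof.
move=> [pi0 univ] X u v iu_iv.
have /univ [h [_ huniq]] : p \o' (i \o' u) = 0 by rewrite comp_assoc pi0 comp0l.
by rewrite -(huniq u erefl) (huniq v (esym iu_iv)).
Qed.

Lemma kernel_factor (A B C X : E) (i : Hom A B) (p : Hom B C) (g : Hom X B) :
  is_kernel i p -> p \o' g = 0 -> exists h, i \o' h = g.
Proof. by move=> [_ univ] /univ [h [ih _]]; exists h. Qed.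

Lemma kernel_unique (A A' B C : E) (i : Hom A B) (j : Hom A' B) (p : Hom B C) :
  is_kernel i p -> is_kernel j p -> exists a : Hom A A', is_iso a /\ j \o' a = i.
Proof.
move=> ker_i ker_j.
have [a ja] := kernel_factor ker_j ker_i.1.
have [b ib] := kernel_factor ker_i ker_j.1.
exists a; split=> //; exists b; split.
  by apply: (kernel_mono ker_i); rewrite comp_assoc ib ja !comp_id_r.
by apply: (kernel_mono ker_j); rewrite comp_assoc ja ib !comp_id_r.
Qed.

Lemma pullback_endo_id (B C C' P : E) (p : Hom B C) (f : Hom C' C)
    (p' : Hom P C') (f' : Hom P B) (w : Hom P P) :
  is_pullback p f p' f' -> f' \o' w = f' -> p' \o' w = p' -> w = idm P.
Proof.
move=> [sq univ] f'w p'w.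
have [h [_ huniq]] := univ P f' p' sq.
by rewrite -(huniq w (conj f'w p'w)) (huniq (idm P)) // !comp_id_r.
Qed.

Lemma pullback_iso (B C C' P : E) (p : Hom B C) (f : Hom C' C)
    (p' : Hom P C') (f' : Hom P B) :
  is_pullback p f p' f' -> is_iso p -> is_iso p'.
Proof.
move=> pb [q [qp pq]].
have /pb.2 [h [[f'h p'h] _]] : p \o' (q \o' f) = f \o' idm C'.
  by rewrite comp_assoc pq comp_id_l comp_id_r.
exists h; split=> //; apply: (pullback_endo_id pb).
  by rewrite comp_assoc f'h -comp_assoc -pb.1 comp_assoc qp comp_id_l.
by rewrite comp_assoc p'h comp_id_l.
Qed.

Lemma pullback_kernel (B C C' P K : E) (p : Hom B C) (f : Hom C' C)
    (p' : Hom P C') (f' : Hom P B) (i : Hom K B) :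
  is_pullback p f p' f' -> is_kernel i p -> exists m : Hom K P, is_kernel m p'.
Proof.
move=> [sq univ] ker_i.
have /univ [m [[f'm p'm] _]] : p \o' i = f \o' 0 by rewrite ker_i.1 comp0r.
exists m; split=> // X g p'g0.
have /ker_i.2 [h [ih huniq]] : p \o' (f' \o' g) = 0.
  by rewrite comp_assoc sq -comp_assoc p'g0 comp0r.
have /univ [w [_ wuniq]] : p \o' (f' \o' g) = f \o' 0.
  by rewrite -ih comp_assoc ker_i.1 !comp0l comp0r.
exists h; split.
  rewrite -(wuniq g) ?(wuniq (m \o' h)) //; split=> //.
    by rewrite comp_assoc f'm.
  by rewrite comp_assoc p'm comp0l.
by move=> h' mh'; apply: huniq; rewrite -f'm -comp_assoc mh'.
Qed.

Lemma pullback_paste (X Y Z W P Q : E) (s : Hom X Y) (t : Hom Y Z) (k : Hom W Z)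
    (t' : Hom P W) (k1 : Hom P Y) (s' : Hom Q P) (k2 : Hom Q X) :
  is_pullback t k t' k1 -> is_pullback s k1 s' k2 ->
  is_pullback (t \o' s) k (t' \o' s') k2.
Proof.
move=> [sq1 univ1] [sq2 univ2]; split.
  by rewrite -comp_assoc sq2 comp_assoc sq1 -comp_assoc.
move=> V u v tsu_kv.
have /univ1 [w1 [[k1w1 t'w1] w1uniq]] : t \o' (s \o' u) = k \o' v by rewrite comp_assoc.
have [w2 [[k2w2 s'w2] w2uniq]] := univ2 V u w1 (esym k1w1).
exists w2; split; first by split=> //; rewrite -comp_assoc s'w2.
move=> w [k2w t's'w]; apply: w2uniq; split=> //; apply/esym/w1uniq; split.
  by rewrite comp_assoc -sq2 -comp_assoc k2w.
by rewrite comp_assoc.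
Qed.

End AdditiveCategory.

Section Conflations.
Variable E : ConflCat.

Lemma confl_kernel (A B C : E) (i : Hom A B) (p : Hom B C) : confl i p -> is_kernel i p.
Proof. by move/confl_kc=> []. Qed.

Lemma confl_comp0 (A B C : E) (i : Hom A B) (p : Hom B C) : confl i p -> p \o' i = 0.
Proof. by move/confl_kernel=> []. Qed.

Lemma confl_mono (A B C : E) (i : Hom A B) (p : Hom B C) : confl i p -> is_mono i.
Proof. by move/confl_kernel/kernel_mono. Qed.

Lemma confl_kernel_replace (A A' B C : E) (i : Hom A B) (j : Hom A' B) (p : Hom B C) :
  confl i p -> is_kernel j p -> confl j p.
Proof.
move=> cip ker_j.
have [a [iso_a ja]] := kernel_unique (confl_kernel cip) ker_j.
apply: (confl_iso cip iso_a (iso_idm B) (iso_idm C)).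
  by rewrite comp_id_l.
by rewrite comp_id_l comp_id_r.
Qed.

Hypothesis HRE : right_exact E.

Lemma iso_confl (X Y : E) (phi : Hom X Y) :
  is_iso phi -> confl (0 : Hom (zero_ob E) X) phi.
Proof.
case: HRE => def0 _ pb_def [psi [psiphi phipsi]].
have [P [p [f [pb [K [j cjp]]]]]] := pb_def _ _ _ _ (0 : Hom Y (zero_ob E)) def0.
have [q [qp pq]] := pullback_iso pb (iso_idm _).
have j0 : j = 0 by rewrite -(comp_id_l j) -qp -comp_assoc (confl_comp0 cjp) comp0r.
have K0 : idm K = 0 by apply: (confl_mono cjp); rewrite comp_id_r comp0r j0.
have iso_K : is_iso (0 : Hom K (zero_ob E)) by exists 0; rewrite !comp0l K0 zero_ob_id.
have iso_psip : is_iso (psi \o' p) by apply: iso_comp; [exists phi | exists q].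
apply: (confl_iso cjp iso_K iso_psip (iso_idm Y)).
  by rewrite comp0l -comp_assoc (confl_comp0 cjp) comp0r.
by rewrite comp_id_l comp_assoc phipsi comp_id_l.
Qed.

Variable PA : E -> Prop.
Hypothesis PA_inhabited : exists A : E, PA A.
Hypothesis HP1 : perc_P1 PA.
Hypothesis HP2 : perc_P2_strong PA.

Lemma PA_zero_ob : PA (zero_ob E).
Proof. by case: PA_inhabited => A PA_A; case: ((HP1 (iso_confl (iso_idm A))).1 PA_A). Qed.

Lemma iso_S_A (X Y : E) (phi : Hom X Y) : is_iso phi -> S_A PA phi.
Proof.
move=> iso_phi; apply: S_A_defl; exists (zero_ob E), 0.
by split; [apply: iso_confl | apply: PA_zero_ob].
Qed.

Lemma S_A_idm (X : E) : S_A PA (idm X).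
Proof. exact/iso_S_A/iso_idm. Qed.

Lemma A_inflation_pullback (X Y Z : E) (i : Hom X Y) (k : Hom Z Y) :
  A_inflation PA i -> exists (P : E) (t : Hom P Z) (h : Hom P X),
  is_pullback i k t h /\ A_inflation PA t.
Proof.
case=> C [q [ciq PA_C]].
have [A' [d [g [[P [t ctd]] PA_A' mono_g gd]]]] := HP2 (q \o' k) PA_C.
have [h ih] : exists h, i \o' h = k \o' t.
  apply: kernel_factor (confl_kernel ciq) _.
  by rewrite comp_assoc -gd -comp_assoc (confl_comp0 ctd) comp0r.
exists P, t, h; split; last by exists A', d.
split=> // W u v iu_kv.
have /(confl_kernel ctd).2 [w [tw wuniq]] : d \o' v = 0.
  apply: mono_g; rewrite comp0r comp_assoc gd -comp_assoc -iu_kv.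
  by rewrite comp_assoc (confl_comp0 ciq) comp0l.
exists w; split; last by move=> w' [_ /wuniq].
split=> //; apply: (confl_mono ciq).
by rewrite comp_assoc ih -comp_assoc tw.
Qed.

Lemma A_deflation_pullback (X Y Z : E) (p : Hom X Y) (k : Hom Z Y) :
  A_deflation PA p -> exists (P : E) (p' : Hom P Z) (k' : Hom P X),
  is_pullback p k p' k' /\ A_deflation PA p'.
Proof.
case=> K [i [cip PA_K]]; case: HRE => _ _ pb_def.
have def_p : deflation p by exists K, i.
have [P [p' [k' [pb [K' [j cjp']]]]]] := pb_def _ _ _ p k def_p.
have [m ker_m] := pullback_kernel pb (confl_kernel cip).
exists P, p', k'; split=> //; exists K, m; split=> //.
exact: confl_kernel_replace cjp' ker_m.
Qed.

Lemma S_A_pullback (X Y Z : E) (s : Hom X Y) (k : Hom Z Y) :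
  S_A PA s -> exists (P : E) (s' : Hom P Z) (k' : Hom P X),
  is_pullback s k s' k' /\ S_A PA s'.
Proof.
move=> Ss; elim: Ss Z k => {X Y s} [X Y i Ai | X Y p Ap | X Y W s t _ IHs _ IHt] Z k.
- have [P [s' [k' [pb As']]]] := A_inflation_pullback k Ai.
  by exists P, s', k'; split; last apply: S_A_infl.
- have [P [s' [k' [pb As']]]] := A_deflation_pullback k Ap.
  by exists P, s', k'; split; last apply: S_A_defl.
- have [P1 [t' [k1 [pb1 St']]]] := IHt Z k.
  have [P2 [s' [k2 [pb2 Ss']]]] := IHs P1 k1.
  exists P2, (t' \o' s'), k2; split; first exact: pullback_paste pb1 pb2.
  exact: S_A_comp.
Qed.

Lemma S_A_cancel (X Y Z : E) (s : Hom X Y) (a b : Hom Z X) : S_A PA s ->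
  s \o' a = s \o' b -> exists (W : E) (u : Hom W Z), S_A PA u /\ a \o' u = b \o' u.
Proof.
move=> Ss; elim: Ss Z a b => {X Y s}
  [X Y i [C [q [ciq _]]] | X Y p [K [i [cip PA_K]]] | X Y W s t _ IHs _ IHt] Z a b.
- move=> /(confl_mono ciq) ->.
  by exists Z, (idm Z); split; first exact: S_A_idm.
- move=> pa_pb.
  have [c ic] : exists c, i \o' c = a - b.
    by apply: kernel_factor (confl_kernel cip) _; rewrite compBr pa_pb subrr.
  have [A' [d [g [[W [u cud]] PA_A' _ gd]]]] := HP2 c PA_K.
  exists W, u; split; first by apply: S_A_infl; exists A', d.
  apply/eqP; rewrite -subr_eq0 -compBl -ic -gd -!comp_assoc (confl_comp0 cud).
  by rewrite !comp0r.
- move=> tsa_tsb.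
  have /IHt [W1 [u1 [Su1 sau1_sbu1]]] : t \o' (s \o' a) = t \o' (s \o' b).
    by rewrite !comp_assoc.
  have /IHs [W2 [u2 [Su2 au1u2_bu1u2]]] : s \o' (a \o' u1) = s \o' (b \o' u1).
    by rewrite !comp_assoc.
  exists W2, (u1 \o' u2); split; first exact: S_A_comp.
  by rewrite !comp_assoc.
Qed.

Lemma S_A_mono_cancel (X Y Z : E) (m : Hom Y Z) (y : Hom X Y) :
  is_mono m -> S_A PA (m \o' y) -> S_A PA y.
Proof.
move=> mono_m Smy.
(* As m is monic, y is itself a pullback of m y along m, so it agrees with the
   pullback provided by S_A_pullback up to an isomorphism. *)
have [P [s' [k' [pb Ss']]]] := S_A_pullback m Smy.
have /pb.2 [h [[k'h s'h] _]] : m \o' y \o' idm X = m \o' y by rewrite comp_id_r.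
have yk' : y \o' k' = s' by apply: mono_m; rewrite comp_assoc pb.1.
have iso_h : is_iso h.
  exists k'; split=> //; apply: (pullback_endo_id pb).
    by rewrite comp_assoc k'h comp_id_l.
  by rewrite comp_assoc s'h yk'.
by rewrite -s'h; apply: S_A_comp (iso_S_A iso_h) Ss'.
Qed.

Definition saturated (Y : E) (V : forall X : E, Hom X Y -> Prop) : Prop :=
  (forall X X' (k : Hom X Y) (g : Hom X' X), V X k -> V X' (k \o' g)) /\
  (forall X X' (k : Hom X Y) (t : Hom X' X), S_A PA t -> V X' (k \o' t) -> V X k).

Definition sieve (Y : E) := {V : forall X : E, Hom X Y -> Prop | saturated V}.

Lemma sieve_ext (Y : E) (V W : sieve Y) :
  (forall X (k : Hom X Y), sval V X k <-> sval W X k) -> V = W.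
Proof.
case: V W => [V satV] [W satW] /= VW.
have eVW : V = W.
  apply: functional_extensionality_dep => X; apply: functional_extensionality => k.
  exact/propositional_extensionality/VW.
by subst W; congr exist; apply: proof_irrelevance.
Qed.

Lemma saturated_full (Y : E) : saturated (fun X (k : Hom X Y) => True).
Proof. by []. Qed.

Definition sieveT (Y : E) : sieve Y := exist _ _ (@saturated_full Y).

Lemma saturated_pb (A B : E) (g : Hom A B) (V : sieve B) :
  saturated (fun X (k : Hom X A) => sval V X (g \o' k)).
Proof.
case: V => V [V_comp V_sat] /=; split=> X X' k h.
  by rewrite comp_assoc; apply: V_comp.
by move=> Sh; rewrite comp_assoc; apply: V_sat.
Qed.

Definition sieve_pb (A B : E) (g : Hom A B) (V : sieve B) : sieve A :=
  exist _ _ (saturated_pb g V).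

Lemma saturated_push (A B : E) (g : Hom A B) (U : sieve A) :
  saturated (fun X (k : Hom X B) => exists (X' : E) (t : Hom X' X) (h : Hom X' A),
    [/\ S_A PA t, k \o' t = g \o' h & sval U X' h]).
Proof.
case: U => U [U_comp U_sat] /=; split=> X X' k v.
- case=> W [t [h [St kt_gh Uh]]].
  have [P [t' [v' [pb St']]]] := S_A_pullback v St.
  exists P, t', (h \o' v'); split=> //; last exact: U_comp.
  by rewrite -comp_assoc -pb.1 comp_assoc kt_gh comp_assoc.
- move=> Sv [W [t [h [St kvt_gh Uh]]]].
  by exists W, (v \o' t), h; split=> //; [apply: S_A_comp | rewrite comp_assoc].
Qed.

Definition sieve_push (A B : E) (g : Hom A B) (U : sieve A) : sieve B :=
  exist _ _ (saturated_push g U).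

Lemma sieve_pb_id (A : E) (V : sieve A) : sieve_pb (idm A) V = V.
Proof. by apply: sieve_ext => X k /=; rewrite comp_id_l. Qed.

Lemma sieve_pb_comp (A B C : E) (g : Hom B C) (f : Hom A B) (V : sieve C) :
  sieve_pb (g \o' f) V = sieve_pb f (sieve_pb g V).
Proof. by apply: sieve_ext => X k /=; rewrite comp_assoc. Qed.

Lemma sieve_pbK (A B : E) (s : Hom A B) :
  S_A PA s -> cancel (sieve_pb s) (sieve_push s).
Proof.
move=> Ss [V [V_comp V_sat]]; apply: sieve_ext => X k /=; split.
  by case=> W [t [h [St kt_sh Vsh]]]; apply: (V_sat _ _ _ t St); rewrite kt_sh.
move=> Vk; have [P [s' [k' [pb Ss']]]] := S_A_pullback k Ss.
by exists P, s', k'; rewrite pb.1; split=> //; apply: V_comp.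
Qed.

Lemma sieve_pushK (A B : E) (s : Hom A B) :
  S_A PA s -> cancel (sieve_push s) (sieve_pb s).
Proof.
move=> Ss [U [U_comp U_sat]]; apply: sieve_ext => X h /=; split; last first.
  by move=> Uh; exists X, (idm X), h; split; rewrite ?comp_id_r //; apply: S_A_idm.
case=> W [t [h' [St sht_sh' Uh']]].
have /(S_A_cancel Ss) [W' [u [Su htu_h'u]]] : s \o' (h \o' t) = s \o' h'.
  by rewrite comp_assoc.
apply: (U_sat _ _ _ (t \o' u) (S_A_comp Su St)).
by rewrite comp_assoc htu_h'u; apply: U_comp.
Qed.

Lemma sieve_pb_bij (A B : E) (s : Hom A B) : S_A PA s -> bijective (sieve_pb s).
Proof. by move=> Ss; exists (sieve_push s); [apply: sieve_pbK | apply: sieve_pushK]. Qed.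

Lemma sieve_pb_inj_factor (A B : E) (f : Hom A B) : injective (sieve_pb f) ->
  exists (Z : E) (x : Hom Z A) (t : Hom Z B), S_A PA t /\ f \o' x = t.
Proof.
move=> inj_f.
have push_full : sieve_push f (sieveT A) = sieveT B.
  apply: inj_f; apply: sieve_ext => X k /=; split=> // _.
  by exists X, (idm X), k; split; rewrite ?comp_id_r //; apply: S_A_idm.
have : sval (sieve_push f (sieveT A)) B (idm B) by rewrite push_full.
by case=> Z [t [x [St t_fx _]]]; exists Z, x, t; rewrite -t_fx comp_id_l.
Qed.

Definition sieve_cat : Category :=
  @Build_Category E (fun X Y => sieve Y -> sieve X) (fun _ V => V)
    (fun _ _ _ g f V => f (g V)) (fun _ _ _ _ _ _ _ => erefl)
    (fun _ _ _ => erefl) (fun _ _ _ => erefl).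

Definition sieve_functor : Functor E sieve_cat :=
  @Build_Functor E sieve_cat id sieve_pb
    (fun A => functional_extensionality _ _ (@sieve_pb_id A))
    (fun _ _ _ g f => functional_extensionality _ _ (sieve_pb_comp g f)).

Lemma sieve_functor_iso (A B : E) (f : Hom A B) :
  c_is_iso (fmap sieve_functor f) <-> bijective (sieve_pb f).
Proof.
split=> [[g [gf fg]] | [g fg gf]].
  by exists g; [apply: equal_f fg | apply: equal_f gf].
by exists g; split; apply: functional_extensionality.
Qed.

Lemma Q_inverts_sieve_pb_bij (A B : E) (f : Hom A B) :
  Q_inverts PA f -> bijective (sieve_pb f).
Proof.
move=> Qf; apply/sieve_functor_iso/Qf => X Y s Ss.
exact/sieve_functor_iso/sieve_pb_bij.
Qed.

Lemma S_A_of_retraction (P Z : E) (r : Hom P Z) (sg : Hom Z P) :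
  r \o' sg = idm Z -> bijective (sieve_pb r) ->
  exists (W : E) (u : Hom W P), S_A PA u /\ S_A PA (r \o' u).
Proof.
move=> rsg bij_r.
have bij_sg : bijective (sieve_pb sg).
  by apply: (bij_can_bij bij_r) => V; rewrite -sieve_pb_comp rsg sieve_pb_id.
have [W [y [u [Su sgy_u]]]] := sieve_pb_inj_factor (bij_inj bij_sg).
exists W, u; split=> //.
have -> : r \o' u = y by rewrite -sgy_u comp_assoc rsg comp_id_l.
by apply: (S_A_mono_cancel (section_mono rsg)); rewrite sgy_u.
Qed.

Lemma S_A_right_weakly_saturated : right_weakly_saturated PA.
Proof.
move=> A B f /Q_inverts_sieve_pb_bij bij_f.
have [Z [x [t [St fx_t]]]] := sieve_pb_inj_factor (bij_inj bij_f).
have [P [t' [f' [pb St']]]] := S_A_pullback f St.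
have /pb.2 [sg [[f'sg _] _]] : t \o' idm Z = f \o' x by rewrite comp_id_r fx_t.
have bij_f' : bijective (sieve_pb f').
  have bij_push : bijective (sieve_push t).
    by exists (sieve_pb t); [apply: sieve_pushK | apply: sieve_pbK].
  apply: (eq_bij (bij_comp (bij_comp (sieve_pb_bij St') bij_f) bij_push)) => V /=.
  by rewrite -!sieve_pb_comp -pb.1 sieve_pb_comp sieve_pushK.
have [W [u [Su Sf'u]]] := S_A_of_retraction f'sg bij_f'.
exists W, (t' \o' u); split; first exact: S_A_comp.
by rewrite comp_assoc -pb.1 -comp_assoc; apply: S_A_comp.
Qed.

End Conflations.

Theorem proposition5p6 (E : ConflCat) (PA : E -> Prop) :
  right_exact E -> strongly_right_percolating PA -> right_weakly_saturated PA.
Proof.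
move=> HRE [[PA_inhabited HP1 _ _ _] HP2].
exact: (@S_A_right_weakly_saturated E HRE PA PA_inhabited HP1 HP2).
Qed.
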